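(* Let $G=(V,E,\sigma)$ be a graph as in the context and $\Gamma$ a nonempty family of walks. Then the function $p\mapsto\mathrm{Mod}_p(\Gamma)$ is continuous on $[1,\infty)$.
   Context: Let $G=(V,E,\sigma)$ be a finite simple graph (directed or undirected) with edge weights $\sigma:E\to(0,\infty)$. A walk is a string of edges $e_1\dots e_r$, $r\ge1$, $e_i=(v_i,v_{i+1})\in E$, with $\rho$-length $\ell_\rho(\gamma)=\sum_i\rho(e_i)$. $A(\Gamma)=\{\rho:E\to\mathbb{R}:\rho\ge0,\ \ell_\rho(\gamma)\ge1\ \forall\gamma\in\Gamma\}$, $\mathcal{E}_p(\rho)=\sum_e\sigma(e)|\rho(e)|^p$, $\mathrm{Mod}_p(\Gamma)=\inf_{\rho\in A(\Gamma)}\mathcal{E}_p(\rho)$. *)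

From Stdlib Require Import Reals List ClassicalEpsilon.
Open Scope R_scope.

(* Edges are given as a duplicate-free list E of
   ordered pairs; in the undirected case the pair (v,w) is a representative
   of the unordered edge {v,w} and may be traversed in both directions. *)

Definition simple_graph {V : Type} (dir : bool) (E : list (V * V)) : Prop :=
  NoDup E /\
  (forall e, In e E -> fst e <> snd e) /\
  (dir = false -> forall v w, In (v, w) E -> ~ In (w, v) E).

Definition trav {V : Type} (dir : bool) (e : V * V) (v w : V) : Prop :=
  e = (v, w) \/ (dir = false /\ e = (w, v)).

Fixpoint walk_from {V : Type} (dir : bool) (E : list (V * V)) (v : V)
    (es : list (V * V)) : Prop :=
  match es with
  | nil => True
  | e :: es' => In e E /\ exists w, trav dir e v w /\ walk_from dir E w es'
  end.

Definition is_walk {V : Type} (dir : bool) (E : list (V * V))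
    (es : list (V * V)) : Prop :=
  es <> nil /\ exists v, walk_from dir E v es.

Definition rho_length {V : Type} (rho : V * V -> R) (es : list (V * V)) : R :=
  fold_right (fun e acc => rho e + acc) 0 es.

Definition powabs (x p : R) : R :=
  if Req_EM_T x 0 then 0 else Rpower (Rabs x) p.

Definition energy {V : Type} (E : list (V * V)) (sigma : V * V -> R)
    (p : R) (rho : V * V -> R) : R :=
  fold_right (fun e acc => sigma e * powabs (rho e) p + acc) 0 E.

Definition admissible {V : Type} (E : list (V * V))
    (Gamma : list (V * V) -> Prop) (rho : V * V -> R) : Prop :=
  (forall e, In e E -> 0 <= rho e) /\
  (forall g, Gamma g -> 1 <= rho_length rho g).

Definition is_glb (S : R -> Prop) (m : R) : Prop :=
  (forall x, S x -> m <= x) /\ (forall b, (forall x, S x -> b <= x) -> b <= m).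

Definition Mod {V : Type} (E : list (V * V)) (sigma : V * V -> R)
    (Gamma : list (V * V) -> Prop) (p : R) : R :=
  epsilon (inhabits 0)
    (is_glb (fun x => exists rho, admissible E Gamma rho /\ x = energy E sigma p rho)).

(* Truncating an admissible density at 1 keeps it admissible (every walk
   contains at least one edge, and all its edges lie in E) and does not
   increase any energy.  For densities with values in [0,1] the map
   p |-> x^p is 1-Lipschitz on [1,oo), so p |-> E_p(rho) is Lipschitz with
   constant sum_e sigma(e), uniformly in rho; taking infima, so is
   p |-> Mod_p(Gamma). *)
From Stdlib Require Import Reals List Lra ClassicalEpsilon.
Open Scope R_scope.

Definition lsum {A : Type} (l : list A) (f : A -> R) : R :=
  fold_right (fun a acc => f a + acc) 0 l.

Lemma lsum_le {A : Type} (l : list A) (f g : A -> R) :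
  (forall a, In a l -> f a <= g a) -> lsum l f <= lsum l g.
Proof.
  induction l as [|a l IH]; simpl; intros Hfg; [lra|].
  specialize (IH (fun b Hb => Hfg b (or_intror Hb))).
  specialize (Hfg a (or_introl eq_refl)). lra.
Qed.

Lemma lsum_ge0 {A : Type} (l : list A) (f : A -> R) :
  (forall a, In a l -> 0 <= f a) -> 0 <= lsum l f.
Proof.
  induction l as [|a l IH]; simpl; intros Hf; [lra|].
  specialize (IH (fun b Hb => Hf b (or_intror Hb))).
  specialize (Hf a (or_introl eq_refl)). lra.
Qed.

Lemma lsum_add {A : Type} (l : list A) (f g : A -> R) :
  lsum l (fun a => f a + g a) = lsum l f + lsum l g.
Proof. induction l as [|a l IH]; simpl; [ring | rewrite IH; ring]. Qed.

Lemma lsum_mulr {A : Type} (l : list A) (f : A -> R) (c : R) :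
  lsum l (fun a => f a * c) = lsum l f * c.
Proof. induction l as [|a l IH]; simpl; [ring | rewrite IH; ring]. Qed.

Lemma rho_length_lsum {V : Type} (rho : V * V -> R) (g : list (V * V)) :
  rho_length rho g = lsum g rho.
Proof. reflexivity. Qed.

Lemma energy_lsum {V : Type} (E : list (V * V)) sigma p rho :
  energy E sigma p rho = lsum E (fun e => sigma e * powabs (rho e) p).
Proof. reflexivity. Qed.

Lemma Rpower_le_1 (x t : R) : 0 < x <= 1 -> 0 <= t -> Rpower x t <= 1.
Proof.
  intros Hx Ht.
  apply Rle_trans with (Rpower 1 t).
  - apply Rle_Rpower_l; lra.
  - right. unfold Rpower. rewrite ln_1, Rmult_0_r. apply exp_0.
Qed.

(* x^p - x^q = x x^(p-1) (1 - x^(q-p)) <= x (-ln x) (q - p) <= q - p, where both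
   inequalities come from 1 + u <= exp u, at u = (q - p) ln x and u = - ln x. *)
Lemma Rpower_sub_le (x p q : R) : 0 < x <= 1 -> 1 <= p -> p <= q ->
  0 <= Rpower x p - Rpower x q <= q - p.
Proof.
  intros Hx Hp Hpq.
  assert (Hsplit : Rpower x q = Rpower x p * Rpower x (q - p)).
  { rewrite <- Rpower_plus. f_equal. ring. }
  assert (Hxp : Rpower x p = x * Rpower x (p - 1)).
  { rewrite <- (Rpower_1 x) at 2 by lra. rewrite <- Rpower_plus. f_equal. ring. }
  assert (Hxp_le : Rpower x (p - 1) <= 1) by (apply Rpower_le_1; lra).
  assert (Hxt_le : Rpower x (q - p) <= 1) by (apply Rpower_le_1; lra).
  assert (Hxp_pos : 0 < Rpower x (p - 1)) by apply exp_pos.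
  assert (Hxt_ge : 1 + (q - p) * ln x <= Rpower x (q - p)) by apply exp_ineq1_le.
  assert (Hln : 1 + ln x <= x).
  { rewrite <- (exp_ln x) at 2 by lra. apply exp_ineq1_le. }
  assert (Hxln : x * (1 - ln x) <= 1).
  { assert (H := exp_ineq1_le (- ln x)).
    rewrite exp_Ropp, exp_ln in H by lra.
    apply Rmult_le_compat_l with (r := x) in H; [|lra].
    rewrite Rinv_r in H by lra. lra. }
  set (a := Rpower x (p - 1)) in *. set (b := Rpower x (q - p)) in *.
  assert (Hlnx : ln x <= 0) by lra.
  assert (Hxa : 0 < x * a) by nra.
  rewrite Hsplit, Hxp. split; [nra|].
  assert (x * a * (1 - b) <= x * a * (- (q - p) * ln x)) by nra.
  assert (0 <= x * (- ln x) * (q - p)).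
  { apply Rmult_le_pos; [apply Rmult_le_pos|]; lra. }
  assert (x * a * (- (q - p) * ln x) <= x * (- ln x) * (q - p)) by nra.
  nra.
Qed.

Lemma powabs_ge0 (x p : R) : 0 <= powabs x p.
Proof.
  unfold powabs; destruct (Req_EM_T x 0); [lra | left; apply exp_pos].
Qed.

Lemma powabs_le (x y p : R) : 0 <= p -> 0 <= x <= y -> powabs x p <= powabs y p.
Proof.
  intros Hp Hxy. unfold powabs.
  destruct (Req_EM_T x 0), (Req_EM_T y 0); try lra.
  - left; apply exp_pos.
  - rewrite !Rabs_pos_eq by lra. apply Rle_Rpower_l; lra.
Qed.

Lemma powabs_dist (x p q : R) : 0 <= x <= 1 -> 1 <= p -> 1 <= q ->
  Rabs (powabs x q - powabs x p) <= Rabs (q - p).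
Proof.
  intros Hx Hp Hq. unfold powabs.
  destruct (Req_EM_T x 0).
  { rewrite Rminus_0_r, Rabs_R0. apply Rabs_pos. }
  assert (Hx0 : 0 < x) by (destruct (proj1 Hx); [assumption | congruence]).
  rewrite (Rabs_pos_eq x) by lra.
  destruct (Rle_dec p q).
  - destruct (Rpower_sub_le x p q ltac:(lra) Hp r).
    rewrite Rabs_left1, (Rabs_pos_eq (q - p)); lra.
  - destruct (Rpower_sub_le x q p ltac:(lra) Hq ltac:(lra)).
    rewrite Rabs_pos_eq, Rabs_left1; lra.
Qed.

Lemma energy_ge0 {V : Type} (E : list (V * V)) sigma p rho :
  (forall e, In e E -> 0 < sigma e) -> 0 <= energy E sigma p rho.
Proof.
  intros Hs. rewrite energy_lsum. apply lsum_ge0. intros e He.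
  specialize (Hs e He). pose proof (powabs_ge0 (rho e) p). nra.
Qed.

Lemma energy_le {V : Type} (E : list (V * V)) sigma p rho1 rho2 :
  0 <= p -> (forall e, In e E -> 0 < sigma e) ->
  (forall e, In e E -> 0 <= rho1 e <= rho2 e) ->
  energy E sigma p rho1 <= energy E sigma p rho2.
Proof.
  intros Hp Hs Hr. rewrite !energy_lsum. apply lsum_le. intros e He.
  specialize (Hs e He). pose proof (powabs_le _ _ p Hp (Hr e He)). nra.
Qed.

Lemma energy_le_add {V : Type} (E : list (V * V)) sigma p q rho :
  (forall e, In e E -> 0 < sigma e) ->
  (forall e, In e E -> 0 <= rho e <= 1) -> 1 <= p -> 1 <= q ->
  energy E sigma q rho <= energy E sigma p rho + lsum E sigma * Rabs (q - p).
Proof.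
  intros Hs Hr Hp Hq.
  rewrite !energy_lsum, <- lsum_mulr, <- lsum_add. apply lsum_le. intros e He.
  specialize (Hs e He).
  pose proof (powabs_dist (rho e) p q (Hr e He) Hp Hq) as Hd.
  pose proof (Rle_abs (powabs (rho e) q - powabs (rho e) p)). nra.
Qed.

Definition truncate {V : Type} (rho : V * V -> R) : V * V -> R :=
  fun e => Rmin (rho e) 1.

Lemma rho_length_truncate {V : Type} (rho : V * V -> R) (g : list (V * V)) :
  (forall e, In e g -> 0 <= rho e) ->
  Rmin 1 (rho_length rho g) <= rho_length (truncate rho) g.
Proof.
  induction g as [|a g IH]; simpl; intros Hr.
  - apply Rmin_r.
  - specialize (IH (fun b Hb => Hr b (or_intror Hb))).
    assert (Ha : 0 <= rho a) by (apply Hr; left; reflexivity).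
    assert (HL : 0 <= rho_length rho g)
      by (apply lsum_ge0; intros; apply Hr; right; assumption).
    assert (HT : 0 <= rho_length (truncate rho) g).
    { apply lsum_ge0. intros b Hb. apply Rmin_glb; [apply Hr; right; exact Hb | lra]. }
    rewrite !rho_length_lsum in *. simpl lsum.
    revert IH HL HT. generalize (lsum g rho) (lsum g (truncate rho)).
    intros L LT. unfold truncate, Rmin. repeat destruct Rle_dec; lra.
Qed.

Lemma walk_from_incl {V : Type} dir (E : list (V * V)) v es :
  walk_from dir E v es -> incl es E.
Proof.
  revert v; induction es as [|a es IH]; simpl; intros v Hw e He; [contradiction|].
  destruct Hw as [Ha [w [_ Hw]]].
  destruct He as [<- | He]; [assumption | exact (IH w Hw e He)].
Qed.

Lemma admissible_truncate {V : Type} dir (E : list (V * V)) Gamma rho :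
  (forall g, Gamma g -> is_walk dir E g) ->
  admissible E Gamma rho -> admissible E Gamma (truncate rho).
Proof.
  intros Hw [Hr Hl]. split.
  - intros e He. apply Rmin_glb; [apply Hr, He | lra].
  - intros g Hg. destruct (Hw g Hg) as [_ [v Hv]].
    pose proof (rho_length_truncate rho g
                  (fun e He => Hr e (walk_from_incl dir E v g Hv e He))) as Ht.
    specialize (Hl g Hg). unfold Rmin in Ht; destruct Rle_dec in Ht; lra.
Qed.

Lemma admissible_one {V : Type} dir (E : list (V * V)) Gamma :
  (forall g, Gamma g -> is_walk dir E g) -> admissible E Gamma (fun _ => 1).
Proof.
  intros Hw. split; [intros; lra|].
  intros g Hg. destruct (Hw g Hg) as [Hne _].
  destruct g as [|a g]; [contradiction|]. simpl.
  assert (0 <= rho_length (fun _ => 1) g) by (apply lsum_ge0; intros; lra). lra.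
Qed.

Lemma is_glb_exists (S : R -> Prop) :
  (exists x, S x) -> (exists b, forall x, S x -> b <= x) -> exists m, is_glb S m.
Proof.
  intros [x Sx] [b Hb].
  destruct (completeness (fun y => S (- y))) as [m [Hub Hlub]].
  - exists (- b). intros y Sy. specialize (Hb _ Sy). lra.
  - exists (- x). rewrite Ropp_involutive. exact Sx.
  - exists (- m). split.
    + intros y Sy. enough (- y <= m) by lra.
      apply Hub. rewrite Ropp_involutive. exact Sy.
    + intros c Hc. enough (m <= - c) by lra.
      apply Hlub. intros y Sy. specialize (Hc _ Sy). lra.
Qed.

Lemma Mod_is_glb {V : Type} dir (E : list (V * V)) sigma Gamma p :
  (forall e, In e E -> 0 < sigma e) ->
  (forall g, Gamma g -> is_walk dir E g) ->
  is_glb (fun x => exists rho, admissible E Gamma rho /\ x = energy E sigma p rho)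
    (Mod E sigma Gamma p).
Proof.
  intros Hs Hw. unfold Mod. apply epsilon_spec, is_glb_exists.
  - exists (energy E sigma p (fun _ => 1)), (fun _ => 1).
    split; [exact (admissible_one dir E Gamma Hw) | reflexivity].
  - exists 0. intros x [rho [_ ->]]. apply energy_ge0, Hs.
Qed.

Lemma Mod_le_add {V : Type} dir (E : list (V * V)) sigma Gamma p q :
  (forall e, In e E -> 0 < sigma e) ->
  (forall g, Gamma g -> is_walk dir E g) -> 1 <= p -> 1 <= q ->
  Mod E sigma Gamma q <= Mod E sigma Gamma p + lsum E sigma * Rabs (q - p).
Proof.
  intros Hs Hw Hp Hq.
  destruct (Mod_is_glb dir E sigma Gamma p Hs Hw) as [_ Hglb_p].
  destruct (Mod_is_glb dir E sigma Gamma q Hs Hw) as [Hlb_q _].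
  enough (Mod E sigma Gamma q - lsum E sigma * Rabs (q - p) <= Mod E sigma Gamma p)
    by lra.
  apply Hglb_p. intros x [rho [Hadm ->]].
  pose proof (admissible_truncate dir E Gamma rho Hw Hadm) as Hadm1.
  assert (Htr : forall e, In e E -> 0 <= truncate rho e) by apply Hadm1.
  assert (Mod E sigma Gamma q <= energy E sigma q (truncate rho))
    by (apply Hlb_q; exists (truncate rho); split; auto).
  assert (energy E sigma q (truncate rho)
          <= energy E sigma p (truncate rho) + lsum E sigma * Rabs (q - p))
    by (apply energy_le_add; auto; intros e He; split; [apply Htr, He | apply Rmin_r]).
  assert (energy E sigma p (truncate rho) <= energy E sigma p rho)
    by (apply energy_le; [lra | auto | intros e He; split; [apply Htr, He | apply Rmin_l]]).
  lra.
Qed.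

Lemma Mod_dist {V : Type} dir (E : list (V * V)) sigma Gamma p q :
  (forall e, In e E -> 0 < sigma e) ->
  (forall g, Gamma g -> is_walk dir E g) -> 1 <= p -> 1 <= q ->
  Rabs (Mod E sigma Gamma q - Mod E sigma Gamma p) <= lsum E sigma * Rabs (q - p).
Proof.
  intros Hs Hw Hp Hq.
  pose proof (Mod_le_add dir E sigma Gamma p q Hs Hw Hp Hq) as Hqp.
  pose proof (Mod_le_add dir E sigma Gamma q p Hs Hw Hq Hp) as Hpq.
  rewrite Rabs_minus_sym in Hpq. apply Rabs_le. lra.
Qed.

Theorem mainTheorem9 (V : Type) (dir : bool) (E : list (V * V))
  (sigma : V * V -> R) (Gamma : list (V * V) -> Prop) :
  simple_graph dir E ->
  (forall e, In e E -> 0 < sigma e) ->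
  (forall g, Gamma g -> is_walk dir E g) ->
  (exists g, Gamma g) ->
  forall p, 1 <= p ->
    forall eps, 0 < eps -> exists delta, 0 < delta /\
      forall q, 1 <= q -> Rabs (q - p) < delta ->
        Rabs (Mod E sigma Gamma q - Mod E sigma Gamma p) < eps.
Proof.
  intros _ Hs Hw _ p Hp eps Heps.
  set (L := lsum E sigma).
  assert (HL : 0 <= L) by (apply lsum_ge0; intros e He; left; apply Hs, He).
  exists (eps / (L + 1)). split; [apply Rdiv_lt_0_compat; lra|].
  intros q Hq Hd.
  apply Rle_lt_trans with (L * Rabs (q - p)).
  { exact (Mod_dist dir E sigma Gamma p q Hs Hw Hp Hq). }
  apply Rle_lt_trans with (L * (eps / (L + 1))).
  - apply Rmult_le_compat_l; lra.
  - apply Rmult_lt_reg_r with (L + 1); [lra|]. field_simplify; lra.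
Qed.
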